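(* Let $I\subseteq\mathbb{R}$ be an interval and let $f:I\to\mathbb{R}$ be convex on $I^{\circ}$, the interior of $I$. Let $a,b\in I^{\circ}$ with $a<b$, and suppose $f'\in L[a,b]$. If $f(a)f(b)>0$ and $\int_a^b f(t)\,dt=0$, then $$f(a)f(b)\le \frac{b-a}{12}\int_a^b f'(x)^2\,dx .$$ Moreover, the constant $\frac{b-a}{12}$ is best possible: it cannot be replaced by a smaller constant such that the inequality remains valid for all functions satisfying the hypotheses.
   Context: $L[a,b]$ denotes the space of Lebesgue integrable functions on $[a,b]$. A convex function on an open interval is differentiable almost everywhere, so $f'$ is defined a.e. on $[a,b]$. *)

From Stdlib Require Import Reals.
Open Scope R_scope.

Definition is_interval (P : R -> Prop) : Prop :=
  forall x y z, P x -> P z -> x <= y <= z -> P y.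

Definition convex_on (D : R -> Prop) (f : R -> R) : Prop :=
  forall x y t, D x -> D y -> 0 <= t <= 1 ->
    f (t * x + (1 - t) * y) <= t * f x + (1 - t) * f y.

(* g is "the" a.e.-defined derivative f' on (a,b): g x = f'(x) at every
   point of (a,b) where f is differentiable (f is differentiable at all
   but countably many points, so g is f' almost everywhere). *)
Definition is_derivative_where_exists (f g : R -> R) (a b : R) : Prop :=
  forall x l, a < x < b -> derivable_pt_lim f x l -> g x = l.

(* With m = (a + b) / 2, L = b - a and S = f(a) + f(b), integration by parts gives
   int_a^b (t - m) f'(t) dt = L S / 2 - int_a^b f = L S / 2, and Cauchy-Schwarz against
   int_a^b (t - m)^2 dt = L^3 / 12 yields 3 S^2 <= L int_a^b f'^2; finally
   f(a) f(b) <= S^2 / 4.  The parabola (t - m)^2 - L^2 / 12 gives equality.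

   Since f' is only known where f is differentiable, every integral is approached by
   uniform Riemann sums tagged at points of differentiability.  Such points exist in every
   interval: intervals along which the gap between outer chord slopes halves shrink to a
   point where the one-sided derivatives agree.  Convexity places both f'(t_i) and the
   chord slope of the i-th cell between the chord slopes of the neighbouring cells; their
   differences telescope, so summation by parts is exact up to O(1/n). *)

From Coquelicot Require Import Coquelicot.
From Stdlib Require Import Reals Lra Lia Classical ClassicalEpsilon.
Open Scope R_scope.

Lemma Rdiv_le_cross x y p q : 0 < p -> 0 < q -> x * q <= y * p -> x / p <= y / q.
Proof.
  intros Hp Hq H.
  replace (x / p) with (x * q * / (p * q)) by (field; lra).
  replace (y / q) with (y * p * / (p * q)) by (field; lra).
  apply Rmult_le_compat_r; [left; apply Rinv_0_lt_compat; nra | exact H].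
Qed.

Lemma nested_intervals_point (p q : nat -> R) :
  Un_growing p -> Un_decreasing q -> (forall n, p n <= q n) ->
  exists x, forall n, p n <= x <= q n.
Proof.
  intros Hp Hq Hpq.
  assert (Hle : forall n m, p n <= q m).
  { intros n m; destruct (Nat.le_ge_cases n m) as [Hnm|Hmn].
    - pose proof (growing_prop p m n Hp Hnm); pose proof (Hpq m); lra.
    - pose proof (decreasing_prop q m n Hq Hmn); pose proof (Hpq n); lra. }
  destruct (completeness (fun x => exists n, x = p n)) as [x [Hub Hlub]].
  - exists (q O); intros y [n ->]; apply Hle.
  - exists (p O), O; reflexivity.
  - exists x; intros n; split.
    + apply Hub; exists n; reflexivity.
    + apply Hlub; intros y [m ->]; apply Hle.
Qed.

Lemma INR_succ_pos n : 0 < INR n + 1.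
Proof. pose proof (pos_INR n); lra. Qed.

Lemma half_pow_eventually_lt (c eps : R) : 0 < eps -> exists N, c * (/ 2) ^ N < eps.
Proof.
  intros Heps.
  assert (Hhalf : Rabs (/ 2) < 1) by (rewrite Rabs_pos_eq; lra).
  pose proof (is_lim_seq_scal_l _ c _ (is_lim_seq_geom _ Hhalf)) as Hlim; simpl in Hlim.
  rewrite Rmult_0_r in Hlim.
  destruct (proj2 (is_lim_seq_spec _ _) Hlim (mkposreal eps Heps)) as [N HN].
  exists N; pose proof (HN N (le_n N)) as HcN; simpl in HcN.
  rewrite Rminus_0_r in HcN; apply Rabs_def2 in HcN; lra.
Qed.

Lemma sum_f_R0_telescope (v : nat -> R) n :
  sum_f_R0 (fun i => v (S i) - v i) n = v (S n) - v O.
Proof. induction n as [|n IH]; simpl; [ring | rewrite IH; ring]. Qed.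

Lemma sum_f_R0_by_parts (f x : nat -> R) (d m : R) n :
  (forall i, x (S i) = x i + d) ->
  sum_f_R0 (fun i => (x (S i) - m) * (f (S i) - f i)) n
  = (x (S n) - m) * f (S n) - (x O - m) * f O - sum_f_R0 (fun i => d * f i) n.
Proof.
  intros Hx.
  rewrite (sum_eq _ (fun i => ((x (S i) - m) * f (S i) - (x i - m) * f i) - d * f i))
    by (intros i _; rewrite Hx; ring).
  rewrite minus_sum, (sum_f_R0_telescope (fun i => (x i - m) * f i)); ring.
Qed.

Lemma interval_interior_segment (P : R -> Prop) (a b : R) :
  is_interval P -> interior P a -> interior P b ->
  exists rho, 0 < rho /\ forall y, a - rho <= y <= b + rho -> interior P y.
Proof.
  intros HP [da Hda] [db Hdb].
  set (r := Rmin da db / 2).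
  assert (Hr : 0 < r) by (apply Rdiv_lt_0_compat; [apply Rmin_pos; apply cond_pos | lra]).
  assert (Hrd : r + r <= da /\ r + r <= db)
    by (unfold r; pose proof (Rmin_l da db); pose proof (Rmin_r da db); lra).
  assert (Hcentre : forall (d : posreal) x, disc x d x)
    by (intros d x; unfold disc; rewrite Rminus_diag, Rabs_R0; apply cond_pos).
  exists r; split; [exact Hr|]; intros y Hy.
  exists (mkposreal r Hr); intros z Hz; unfold disc in Hz; simpl in Hz.
  apply Rabs_def2 in Hz.
  destruct (Rle_dec z a) as [Hza|Hza]; [|destruct (Rle_dec b z) as [Hbz|Hbz]].
  - apply Hda; unfold disc; rewrite Rabs_left1; lra.
  - apply Hdb; unfold disc; rewrite Rabs_pos_eq; lra.
  - apply (HP a z b); [apply Hda, Hcentre | apply Hdb, Hcentre | lra].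
Qed.

Lemma interior_full (x : R) : interior (fun _ => True) x.
Proof. exists (mkposreal 1 Rlt_0_1); intros y _; exact I. Qed.

Lemma is_RInt_RiemannInt (f : R -> R) (a b : R) (pr : Riemann_integrable f a b) :
  is_RInt f a b (RiemannInt pr).
Proof.
  pose proof (RInt_correct f a b (ex_RInt_Reals_1 f a b pr)) as H.
  rewrite (RInt_Reals f a b pr) in H; exact H.
Qed.

Lemma RiemannInt_eq_of_is_RInt (f : R -> R) (a b l : R) (pr : Riemann_integrable f a b) :
  is_RInt f a b l -> RiemannInt pr = l.
Proof. intros H; rewrite <- (RInt_Reals f a b pr); exact (is_RInt_unique f a b l H). Qed.

Lemma is_RInt_sq_shift (a b m : R) :
  is_RInt (fun t => (t - m) ^ 2) a b ((b - m) ^ 3 / 3 - (a - m) ^ 3 / 3).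
Proof.
  apply (is_RInt_derive (fun t => (t - m) ^ 3 / 3)).
  - intros x _; auto_derive; [exact I | field].
  - intros x _; apply (@ex_derive_continuous R_AbsRing R_NormedModule); auto_derive; exact I.
Qed.

Lemma Riemann_integrable_of_ex_derive (f : R -> R) (a b : R) :
  a <= b -> (forall x, ex_derive f x) -> Riemann_integrable f a b.
Proof.
  intros Hab Hf; apply continuity_implies_RiemannInt; [exact Hab|]; intros x _.
  apply continuity_pt_filterlim, (@ex_derive_continuous R_AbsRing R_NormedModule), Hf.
Qed.

(** * Chord slopes of convex functions *)

Lemma convex_on_subset (D E : R -> Prop) (f : R -> R) :
  (forall x, E x -> D x) -> convex_on D f -> convex_on E f.
Proof. intros HED Hf x y t Ex Ey Ht; apply Hf; auto. Qed.

Definition slope (f : R -> R) (u v : R) : R := (f v - f u) / (v - u).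

Section ConvexSlopes.

Variables (f : R -> R) (lo hi : R).
Hypothesis f_convex : convex_on (fun x => lo <= x <= hi) f.

Lemma three_chord_slopes u v w : lo <= u -> u < v -> v < w -> w <= hi ->
  slope f u v <= slope f u w /\ slope f u w <= slope f v w.
Proof.
  intros Hlo Huv Hvw Hhi.
  set (t := (w - v) / (w - u)).
  assert (Ht : 0 <= t <= 1).
  { unfold t; split.
    - apply Rdiv_le_0_compat; lra.
    - apply (Rdiv_le_1 (w - v) (w - u)); lra. }
  pose proof (f_convex u w t ltac:(lra) ltac:(lra) Ht) as Hv.
  replace (t * u + (1 - t) * w) with v in Hv by (unfold t; field; lra).
  assert (Hfv : (w - u) * f v <= (w - v) * f u + (v - u) * f w).
  { replace ((w - v) * f u + (v - u) * f w) with ((w - u) * (t * f u + (1 - t) * f w))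
      by (unfold t; field; lra).
    apply Rmult_le_compat_l; lra. }
  unfold slope; split; apply Rdiv_le_cross; lra.
Qed.

Lemma slope_mono u v u' v' : lo <= u -> u < v -> u' < v' -> v' <= hi ->
  u <= u' -> v <= v' -> slope f u v <= slope f u' v'.
Proof.
  intros Hlo Huv Huv' Hhi Hu Hv.
  assert (Hright : slope f u v <= slope f u v').
  { destruct (Req_dec v v') as [<-|Hne]; [lra|].
    apply (three_chord_slopes u v v'); lra. }
  assert (Hleft : slope f u v' <= slope f u' v').
  { destruct (Req_dec u u') as [<-|Hne]; [lra|].
    apply (three_chord_slopes u u' v'); lra. }
  lra.
Qed.

Lemma slope_le_derive u v t l : lo <= u -> u < v -> v <= t -> t <= hi ->
  derivable_pt_lim f t l -> slope f u v <= l.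
Proof.
  intros Hlo Huv Hvt Hhi Hl.
  apply Rnot_lt_le; intros Hlt.
  destruct (Hl (slope f u v - l) ltac:(lra)) as [d Hd].
  set (k := Rmin (d / 2) (t - u)).
  assert (Hk : 0 < k <= t - u /\ k < d).
  { pose proof (cond_pos d); unfold k; split; [split|].
    - apply Rmin_pos; lra.
    - apply Rmin_r.
    - pose proof (Rmin_l (d / 2) (t - u)); lra. }
  pose proof (Hd (- k) ltac:(lra) ltac:(rewrite Rabs_Ropp, Rabs_pos_eq; lra)) as Hq.
  replace ((f (t + - k) - f t) / - k) with (slope f (t - k) t) in Hq
    by (unfold slope; replace (t + - k) with (t - k) by ring; field; lra).
  pose proof (slope_mono u v (t - k) t ltac:(lra) Huv ltac:(lra) Hhi ltac:(lra) Hvt).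
  apply Rabs_def2 in Hq; lra.
Qed.

Lemma derive_le_slope u v t l : lo <= t -> t <= u -> u < v -> v <= hi ->
  derivable_pt_lim f t l -> l <= slope f u v.
Proof.
  intros Hlo Htu Huv Hhi Hl.
  apply Rnot_lt_le; intros Hlt.
  destruct (Hl (l - slope f u v) ltac:(lra)) as [d Hd].
  set (k := Rmin (d / 2) (v - t)).
  assert (Hk : 0 < k <= v - t /\ k < d).
  { pose proof (cond_pos d); unfold k; split; [split|].
    - apply Rmin_pos; lra.
    - apply Rmin_r.
    - pose proof (Rmin_l (d / 2) (v - t)); lra. }
  pose proof (Hd k ltac:(lra) ltac:(rewrite Rabs_pos_eq; lra)) as Hq.
  replace ((f (t + k) - f t) / k) with (slope f t (t + k)) in Hq
    by (unfold slope; field; lra).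
  pose proof (slope_mono t (t + k) u v Hlo ltac:(lra) Huv Hhi Htu ltac:(lra)).
  apply Rabs_def2 in Hq; lra.
Qed.

Lemma slope_bounded lo' hi' : lo < lo' -> hi' < hi ->
  exists K, forall u v, lo' <= u -> u < v -> v <= hi' -> Rabs (slope f u v) <= K.
Proof.
  intros Hlo Hhi.
  exists (Rabs (slope f lo lo') + Rabs (slope f hi' hi)); intros u v Hu Huv Hv.
  pose proof (slope_mono lo lo' u v ltac:(lra) Hlo Huv ltac:(lra) ltac:(lra) ltac:(lra)).
  pose proof (slope_mono u v hi' hi ltac:(lra) Huv Hhi ltac:(lra) ltac:(lra) ltac:(lra)).
  pose proof (Rabs_pos (slope f lo lo')); pose proof (Rabs_pos (slope f hi' hi)).
  pose proof (Rle_abs (slope f hi' hi)); pose proof (Rle_abs (- slope f lo lo')).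
  rewrite Rabs_Ropp in *.
  apply Rabs_le; lra.
Qed.

Definition slope_gap (p q : R) : R :=
  slope f (q - (q - p) / 4) q - slope f p (p + (q - p) / 4).

Lemma derivable_of_slope_gaps x :
  (forall eps, 0 < eps -> exists p q, lo <= p /\ q <= hi /\
     p + (q - p) / 4 <= x <= q - (q - p) / 4 /\ p < q /\ slope_gap p q < eps) ->
  exists l, derivable_pt_lim f x l.
Proof.
  intros Hgap.
  assert (Hx : lo < x < hi).
  { destruct (Hgap 1 Rlt_0_1) as [p [q Hpq]]; lra. }
  destruct (completeness (fun y => exists z, lo <= z < x /\ y = slope f z x)) as [l [Hub Hlub]].
  - exists (slope f x hi); intros y [z [Hz ->]].
    apply slope_mono; lra.
  - exists (slope f lo x), lo; split; [lra | reflexivity].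
  - assert (Hleft : forall z, lo <= z < x -> slope f z x <= l).
    { intros z Hz; apply Hub; exists z; auto. }
    assert (Hright : forall w, x < w <= hi -> l <= slope f x w).
    { intros w Hw; apply Hlub; intros y [z [Hz ->]]; apply slope_mono; lra. }
    exists l; intros eps Heps.
    destruct (Hgap eps Heps) as [p [q (Hp & Hq & Hxpq & Hpq & Hsmall)]].
    set (delta := (q - p) / 4).
    assert (Hdelta : 0 < delta) by (unfold delta; lra).
    assert (Hsandwich : forall k, 0 < k <= delta ->
      slope f (x - k) x <= l <= slope f x (x + k) /\
      slope f x (x + k) - slope f (x - k) x < eps).
    { intros k Hk; unfold slope_gap in Hsmall; fold delta in Hsmall, Hxpq.
      pose proof (slope_mono x (x + k) (q - delta) q).
      pose proof (slope_mono p (p + delta) (x - k) x).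
      split; [split; [apply Hleft | apply Hright]; lra | lra]. }
    exists (mkposreal delta Hdelta); simpl; intros h Hh0 Hh.
    destruct (Rlt_or_le 0 h) as [Hpos|Hneg].
    + rewrite Rabs_pos_eq in Hh by lra.
      replace ((f (x + h) - f x) / h) with (slope f x (x + h)) by (unfold slope; f_equal; ring).
      pose proof (Hsandwich h ltac:(lra)).
      apply Rabs_def1; lra.
    + rewrite Rabs_left1 in Hh by lra.
      replace ((f (x + h) - f x) / h) with (slope f (x - - h) x)
        by (unfold slope; replace (x - - h) with (x + h) by ring; field; lra).
      pose proof (Hsandwich (- h) ltac:(lra)).
      apply Rabs_def1; lra.
Qed.

(* With h = (q - p) / 8, the slope gaps of [p + 2h, p + 3h] and [p + 4h, p + 5h] add up to at
   most [slope_gap p q], because chord slopes increase; so one of them is at most half of it. *)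
Definition gap_step (pq : R * R) : R * R :=
  let (p, q) := pq in
  let h := (q - p) / 8 in
  if Rle_dec (slope_gap (p + 2 * h) (p + 3 * h)) (slope_gap p q / 2)
  then (p + 2 * h, p + 3 * h) else (p + 4 * h, p + 5 * h).

Lemma gap_step_spec p q : lo <= p -> p < q -> q <= hi ->
  p + (q - p) / 4 <= fst (gap_step (p, q)) /\
  fst (gap_step (p, q)) < snd (gap_step (p, q)) /\
  snd (gap_step (p, q)) <= q - (q - p) / 4 /\
  slope_gap (fst (gap_step (p, q))) (snd (gap_step (p, q))) <= slope_gap p q / 2.
Proof.
  intros Hp Hpq Hq; unfold gap_step.
  set (h := (q - p) / 8).
  assert (Hh : 0 < h) by (unfold h; lra).
  assert (Hgap1 : slope_gap (p + 2 * h) (p + 3 * h)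
                  <= slope f (p + 3 * h) (p + 4 * h) - slope f (p + h) (p + 2 * h)).
  { unfold slope_gap.
    pose proof (slope_mono (p + 3 * h - (p + 3 * h - (p + 2 * h)) / 4) (p + 3 * h)
                           (p + 3 * h) (p + 4 * h)).
    pose proof (slope_mono (p + h) (p + 2 * h)
                           (p + 2 * h) (p + 2 * h + (p + 3 * h - (p + 2 * h)) / 4)).
    unfold h in *; lra. }
  assert (Hgap2 : slope_gap (p + 4 * h) (p + 5 * h)
                  <= slope f (p + 5 * h) (p + 6 * h) - slope f (p + 3 * h) (p + 4 * h)).
  { unfold slope_gap.
    pose proof (slope_mono (p + 5 * h - (p + 5 * h - (p + 4 * h)) / 4) (p + 5 * h)
                           (p + 5 * h) (p + 6 * h)).
    pose proof (slope_mono (p + 3 * h) (p + 4 * h)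
                           (p + 4 * h) (p + 4 * h + (p + 5 * h - (p + 4 * h)) / 4)).
    unfold h in *; lra. }
  assert (Hgap : slope f (p + 5 * h) (p + 6 * h) - slope f (p + h) (p + 2 * h) <= slope_gap p q).
  { unfold slope_gap.
    pose proof (slope_mono (p + 5 * h) (p + 6 * h) (q - (q - p) / 4) q).
    pose proof (slope_mono p (p + (q - p) / 4) (p + h) (p + 2 * h)).
    unfold h in *; lra. }
  destruct (Rle_dec _ _); simpl; unfold h in *; repeat split; lra.
Qed.

Lemma exists_derivable_point p0 q0 : lo <= p0 -> p0 < q0 -> q0 <= hi ->
  exists x l, p0 < x < q0 /\ derivable_pt_lim f x l.
Proof.
  intros Hp0 Hpq0 Hq0.
  set (I n := Nat.iter n gap_step (p0, q0)).
  set (p n := fst (I n)); set (q n := snd (I n)).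
  assert (Hstep : forall n, p (S n) = fst (gap_step (p n, q n)) /\
                            q (S n) = snd (gap_step (p n, q n))).
  { intros n; unfold p, q; rewrite <- surjective_pairing; split; reflexivity. }
  assert (Hinv : forall n, p0 <= p n /\ p n < q n /\ q n <= q0 /\
                   slope_gap (p n) (q n) <= slope_gap p0 q0 * (/ 2) ^ n).
  { induction n as [|n IH]; [unfold p, q, I; simpl; lra|].
    destruct IH as (Hp & Hpq & Hq & Hg).
    pose proof (gap_step_spec (p n) (q n) ltac:(lra) Hpq ltac:(lra)).
    destruct (Hstep n) as [-> ->]; simpl pow; lra. }
  assert (Hnest : forall n, p n + (q n - p n) / 4 <= p (S n) /\
                            q (S n) <= q n - (q n - p n) / 4).
  { intros n; destruct (Hinv n) as (Hp & Hpq & Hq & _).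
    pose proof (gap_step_spec (p n) (q n) ltac:(lra) Hpq ltac:(lra)).
    destruct (Hstep n) as [-> ->]; lra. }
  destruct (nested_intervals_point p q) as [x Hx].
  - intros n; pose proof (Hnest n); pose proof (Hinv n); lra.
  - intros n; pose proof (Hnest n); pose proof (Hinv n); lra.
  - intros n; pose proof (Hinv n); lra.
  - assert (Hquarter : forall n, p n + (q n - p n) / 4 <= x <= q n - (q n - p n) / 4).
    { intros n; pose proof (Hnest n); pose proof (Hx (S n)); lra. }
    assert (Hx0 : p0 < x < q0).
    { pose proof (Hquarter O); unfold p, q, I in *; simpl in *; lra. }
    destruct (derivable_of_slope_gaps x) as [l Hl]; [|exists x, l; auto].
    intros eps Heps.
    destruct (half_pow_eventually_lt (slope_gap p0 q0) eps Heps) as [N HN].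
    exists (p N), (q N); destruct (Hinv N) as (Hp & Hpq & Hq & Hg).
    repeat split; try apply Hquarter; lra.
Qed.

End ConvexSlopes.

Lemma exists_derivable_tags (f g : R -> R) (a b : R) :
  convex_on (fun x => a <= x <= b) f -> is_derivative_where_exists f g a b ->
  exists tag : R -> R -> R,
    (forall x y, x <= y -> x <= tag x y <= y) /\
    (forall x y, a <= x -> x < y -> y <= b ->
       x < tag x y < y /\ derivable_pt_lim f (tag x y) (g (tag x y))).
Proof.
  intros Hconv Hder.
  assert (Hex : forall xy : R * R, exists t,
    (fst xy <= snd xy -> fst xy <= t <= snd xy) /\
    (a <= fst xy -> fst xy < snd xy -> snd xy <= b ->
       fst xy < t < snd xy /\ derivable_pt_lim f t (g t))).
  { intros [x y]; simpl.
    destruct (classic (a <= x /\ x < y /\ y <= b)) as [(Hax & Hxy & Hyb)|Hout].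
    - destruct (exists_derivable_point f a b Hconv x y Hax Hxy Hyb) as [t [l [Ht Hl]]].
      exists t; split; [lra|]; intros _ _ _; split; [exact Ht|].
      rewrite (Hder t l ltac:(lra) Hl); exact Hl.
    - exists x; split; [lra|]; intros; exfalso; auto. }
  destruct (choice _ Hex) as [tag Htag].
  exists (fun x y => tag (x, y)); split; intros x y; apply (Htag (x, y)).
Qed.

(** * Summation by parts against a convex function *)

Lemma moment_term_error (f : R -> R) (x d t m l M K : R) :
  convex_on (fun y => x - d <= y <= x + 2 * d) f -> 0 < d -> x < t < x + d ->
  derivable_pt_lim f t l -> Rabs (t - m) <= M -> Rabs (slope f x (x + d)) <= K ->
  Rabs (d * ((t - m) * l) - (x + d - m) * (f (x + d) - f x))
  <= d * (M * (slope f (x + d) (x + 2 * d) - slope f (x - d) x) + d * K).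
Proof.
  intros Hconv Hd Ht Hl HM HK.
  set (s := slope f x (x + d)).
  set (lower := slope f (x - d) x); set (upper := slope f (x + d) (x + 2 * d)).
  assert (Hl_lower : lower <= l)
    by (apply (slope_le_derive f (x - d) (x + 2 * d) Hconv _ _ t); [lra .. | exact Hl]).
  assert (Hl_upper : l <= upper)
    by (apply (derive_le_slope f (x - d) (x + 2 * d) Hconv _ _ t); [lra .. | exact Hl]).
  assert (Hs_lower : lower <= s) by (apply (slope_mono f (x - d) (x + 2 * d) Hconv); lra).
  assert (Hs_upper : s <= upper) by (apply (slope_mono f (x - d) (x + 2 * d) Hconv); lra).
  replace (d * ((t - m) * l) - (x + d - m) * (f (x + d) - f x))
    with (d * ((t - m) * (l - s)) + d * ((t - (x + d)) * s))
    by (unfold s, slope; field; lra).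
  eapply Rle_trans; [apply Rabs_triang|].
  rewrite !Rabs_mult, !(Rabs_pos_eq d) by lra.
  assert (Rabs (t - m) * Rabs (l - s) <= M * (upper - lower)).
  { apply Rmult_le_compat; try apply Rabs_pos; [lra|]. apply Rabs_le; lra. }
  assert (Rabs (t - (x + d)) * Rabs s <= d * K).
  { apply Rmult_le_compat; try apply Rabs_pos; [|exact HK]. apply Rabs_le; lra. }
  nra.
Qed.

Lemma moment_sum_error (f g : R -> R) (x t : nat -> R) (n : nat) (d m M K : R) :
  0 < d -> (forall i, x (S i) = x i + d) ->
  convex_on (fun y => x O - d <= y <= x (S (S n))) f ->
  (forall i, (i <= n)%nat -> x i < t i < x (S i) /\ derivable_pt_lim f (t i) (g (t i))) ->
  (forall i, (i <= n)%nat -> Rabs (t i - m) <= M) ->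
  (forall i, (i <= S (S n))%nat -> Rabs (slope f (x i - d) (x i)) <= K) ->
  Rabs (sum_f_R0 (fun i => d * ((t i - m) * g (t i))) n
        - sum_f_R0 (fun i => (x (S i) - m) * (f (x (S i)) - f (x i))) n)
  <= d * (4 * M * K + INR (S n) * d * K).
Proof.
  intros Hd Hx Hconv Ht HM HK.
  assert (Hxi : forall i, x i = x O + INR i * d).
  { induction i as [|i IH]; [simpl; ring | rewrite Hx, IH, S_INR; ring]. }
  assert (Hxle : forall i j, (i <= j)%nat -> x i <= x j).
  { intros i j Hij; rewrite (Hxi i), (Hxi j).
    apply Rplus_le_compat_l, Rmult_le_compat_r; [lra | apply le_INR, Hij]. }
  set (u j := slope f (x j - d) (x j)).
  assert (Hu : forall i, slope f (x i) (x i + d) = u (S i) /\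
                         slope f (x i + d) (x i + 2 * d) = u (S (S i))).
  { intros i; unfold u; rewrite !Hx; split; f_equal; ring. }
  assert (HM0 : 0 <= M) by (pose proof (HM O (Nat.le_0_l n)); pose proof (Rabs_pos (t O - m)); lra).
  rewrite <- minus_sum.
  eapply Rle_trans; [apply Rsum_abs|].
  eapply Rle_trans.
  { apply (sum_Rle _ (fun i => (u (S (S i)) - u (S i) + (u (S i) - u i)) * (d * M) + d * d * K)).
    intros i Hi; destruct (Ht i Hi) as [Hti Hder]; destruct (Hu i) as [Hu1 Hu2].
    assert (Hconv_i : convex_on (fun y => x i - d <= y <= x i + 2 * d) f).
    { apply (convex_on_subset _ _ f) with (2 := Hconv); intros y Hy.
      pose proof (Hxle O i (Nat.le_0_l i)); pose proof (Hxle (S (S i)) (S (S n)) ltac:(lia)).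
      rewrite !Hx in *; lra. }
    assert (HK_i : Rabs (slope f (x i) (x i + d)) <= K) by (rewrite Hu1; apply HK; lia).
    rewrite Hx in Hti.
    pose proof (moment_term_error f (x i) d (t i) m (g (t i)) M K Hconv_i Hd Hti Hder
                  (HM i Hi) HK_i) as Hterm.
    rewrite Hu2, <- Hx in Hterm; fold (u i) in Hterm; lra. }
  rewrite sum_plus, <- scal_sum, sum_plus, (sum_f_R0_telescope (fun j => u (S j))),
    sum_f_R0_telescope, sum_cte.
  assert (Hbound : u (S (S n)) - u 1%nat + (u (S n) - u O) <= 4 * K).
  { pose proof (HK O ltac:(lia)); pose proof (HK 1%nat ltac:(lia));
    pose proof (HK (S n) ltac:(lia)); pose proof (HK (S (S n)) ltac:(lia)).
    unfold u; repeat match goal with H : Rabs _ <= K |- _ => apply Rabs_le_between in H end.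
    lra. }
  assert (d * M * (u (S (S n)) - u 1%nat + (u (S n) - u O)) <= d * M * (4 * K))
    by (apply Rmult_le_compat_l; [apply Rmult_le_pos|]; lra).
  lra.
Qed.

(** * Uniformly tagged Riemann sums *)

Definition unif_node (a b : R) (n i : nat) : R := a + INR i * (b - a) / (INR n + 1).

(* [sum_f_R0 F n] has n + 1 terms, one for each cell of [unif_part a b n]. *)
Definition unif_riemann_sum (phi : R -> R) (tag : R -> R -> R) (a b : R) (n : nat) : R :=
  sum_f_R0 (fun i => (b - a) / (INR n + 1) *
                     phi (tag (unif_node a b n i) (unif_node a b n (S i)))) n.

Lemma unif_node_S a b n i : unif_node a b n (S i) = unif_node a b n i + (b - a) / (INR n + 1).
Proof. unfold unif_node; rewrite S_INR; field; apply Rgt_not_eq, INR_succ_pos. Qed.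

Lemma unif_node_0 a b n : unif_node a b n O = a.
Proof. unfold unif_node; simpl; field; apply Rgt_not_eq, INR_succ_pos. Qed.

Lemma unif_node_last a b n : unif_node a b n (S n) = b.
Proof. unfold unif_node; rewrite S_INR; field; apply Rgt_not_eq, INR_succ_pos. Qed.

Lemma unif_node_bounds a b n i : a <= b -> (i <= S n)%nat ->
  a <= unif_node a b n i <= b.
Proof.
  intros Hab Hi; unfold unif_node.
  pose proof (INR_succ_pos n); pose proof (pos_INR i).
  apply le_INR in Hi; rewrite S_INR in Hi.
  assert (0 <= INR i * (b - a) / (INR n + 1) <= b - a); [|lra].
  split.
  - apply Rdiv_le_0_compat; [apply Rmult_le_pos|]; lra.
  - apply Rle_div_l; [lra|]; nra.
Qed.

Lemma mkseq_S_shift (x : nat -> R) k :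
  seq.mkseq x (S k) = (x O :: seq.mkseq (fun i => x (S i)) k)%list.
Proof.
  unfold seq.mkseq; change (seq.iota 0 (S k)) with (O :: seq.iota (1 + 0) k)%list.
  cbn [seq.map]; f_equal.
  rewrite seq.iotaDl, <- seq.map_comp; reflexivity.
Qed.

Lemma Riemann_sum_mkseq (phi : R -> R) (tag : R -> R -> R) k : forall x : nat -> R,
  Riemann_sum phi (SF_seq_f2 tag (seq.mkseq x (S (S k))))
  = sum_f_R0 (fun i => (x (S i) - x i) * phi (tag (x i) (x (S i)))) k.
Proof.
  induction k as [|k IH]; intros x.
  - unfold Riemann_sum; simpl; unfold plus, scal, zero; simpl; unfold mult; simpl; ring.
  - rewrite mkseq_S_shift, SF_cons_f2 by (rewrite seq.size_mkseq; lia).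
    rewrite Riemann_sum_cons, IH, (decomp_sum _ (S k)) by lia.
    simpl; unfold plus, scal; simpl; unfold mult; simpl; ring.
Qed.

Lemma Riemann_sum_unif_part (phi : R -> R) (tag : R -> R -> R) a b n :
  Riemann_sum phi (SF_seq_f2 tag (unif_part a b n)) = unif_riemann_sum phi tag a b n.
Proof.
  unfold unif_part; rewrite Riemann_sum_mkseq; apply sum_eq; intros i _.
  fold (unif_node a b n i) (unif_node a b n (S i)).
  rewrite (unif_node_S a b n i); ring.
Qed.

Lemma is_lim_seq_unif_step c : is_lim_seq (fun n => c / (INR n + 1)) 0.
Proof.
  assert (Hinf : is_lim_seq (fun n => INR n + 1) p_infty).
  { apply (is_lim_seq_ext (fun n => INR (S n))); [intros n; apply S_INR|].
    apply (is_lim_seq_incr_1 INR), is_lim_seq_INR. }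
  pose proof (is_lim_seq_scal_l _ c _ (is_lim_seq_inv _ _ Hinf ltac:(discriminate))) as H.
  simpl in H; rewrite Rmult_0_r in H; exact H.
Qed.

Lemma is_lim_seq_unif_riemann_sum (phi : R -> R) (tag : R -> R -> R) a b l :
  a < b -> (forall x y, x <= y -> x <= tag x y <= y) -> is_RInt phi a b l ->
  is_lim_seq (unif_riemann_sum phi tag a b) l.
Proof.
  intros Hab Htag Hint.
  apply is_lim_seq_spec; intros eps.
  destruct (proj1 (filterlim_locally _ _) Hint eps) as [delta Hdelta].
  pose proof (proj2 (is_lim_seq_spec _ _) (is_lim_seq_unif_step (b - a)) delta) as [N HN].
  exists N; intros n Hn.
  destruct (Riemann_fine_unif_part tag a b n Htag ltac:(lra)) as (Hstep & Hptd & Hh & Hlast).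
  specialize (HN n Hn); rewrite Rminus_0_r, Rabs_pos_eq in HN
    by (apply Rdiv_le_0_compat; [lra | apply INR_succ_pos]).
  rewrite Rmin_left, Rmax_right in Hdelta by lra.
  pose proof (Hdelta (SF_seq_f2 tag (unif_part a b n)) ltac:(lra) (conj Hptd (conj Hh Hlast)))
    as Hball.
  rewrite sign_eq_1 in Hball by lra.
  change (Rabs (1 * Riemann_sum phi (SF_seq_f2 tag (unif_part a b n)) - l) < eps) in Hball.
  rewrite Rmult_1_l, Riemann_sum_unif_part in Hball; exact Hball.
Qed.

Lemma unif_riemann_sum_sq_expand (h k : R -> R) tag a b lam n :
  unif_riemann_sum (fun t => (k t - lam * h t) ^ 2) tag a b n
  = unif_riemann_sum (fun t => k t ^ 2) tag a b n
    - 2 * lam * unif_riemann_sum (fun t => h t * k t) tag a b n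
    + lam ^ 2 * unif_riemann_sum (fun t => h t ^ 2) tag a b n.
Proof.
  unfold unif_riemann_sum.
  rewrite (scal_sum _ n (2 * lam)), (scal_sum _ n (lam ^ 2)), <- minus_sum, <- sum_plus.
  apply sum_eq; intros i _; ring.
Qed.

Lemma unif_riemann_sum_cauchy_schwarz (h k : R -> R) tag a b (C A D : R) :
  a <= b -> 0 < C ->
  is_lim_seq (unif_riemann_sum (fun t => h t ^ 2) tag a b) C ->
  is_lim_seq (unif_riemann_sum (fun t => k t ^ 2) tag a b) A ->
  is_lim_seq (unif_riemann_sum (fun t => h t * k t) tag a b) D ->
  D ^ 2 <= C * A.
Proof.
  intros Hab HC Hh Hk Hhk.
  set (lam := D / C).
  assert (Hlim : is_lim_seq (unif_riemann_sum (fun t => (k t - lam * h t) ^ 2) tag a b)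
                            (A - 2 * lam * D + lam ^ 2 * C)).
  { apply (is_lim_seq_ext _ _ _ (fun n => eq_sym (unif_riemann_sum_sq_expand h k tag a b lam n))).
    apply is_lim_seq_plus'; [apply is_lim_seq_minus'; [exact Hk|]|];
      apply (is_lim_seq_scal_l _ _ (Finite _)); assumption. }
  assert (Hnonneg : 0 <= A - 2 * lam * D + lam ^ 2 * C).
  { assert (Hsq : forall n, 0 <= unif_riemann_sum (fun t => (k t - lam * h t) ^ 2) tag a b n).
    { intros n; apply cond_pos_sum; intros i.
      apply Rmult_le_pos; [apply Rdiv_le_0_compat; [lra | apply INR_succ_pos] | apply pow2_ge_0]. }
    exact (is_lim_seq_le _ _ (Finite 0) (Finite _) Hsq (is_lim_seq_const 0) Hlim). }
  assert (Hid : C * (A - 2 * lam * D + lam ^ 2 * C) = C * A - D ^ 2) by (unfold lam; field; lra).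
  pose proof (Rmult_le_pos C _ (Rlt_le _ _ HC) Hnonneg); lra.
Qed.

(** * The moment inequality *)

Lemma unif_moment_sum_error (f g : R -> R) (tag : R -> R -> R) (a b m M K : R) (n : nat) :
  a < b ->
  convex_on (fun x => a - (b - a) / (INR n + 1) <= x <= b + (b - a) / (INR n + 1)) f ->
  (forall x y, a <= x -> x < y -> y <= b ->
     x < tag x y < y /\ derivable_pt_lim f (tag x y) (g (tag x y))) ->
  (forall t, a <= t <= b -> Rabs (t - m) <= M) ->
  (forall u v, a - (b - a) / (INR n + 1) <= u -> u < v -> v <= b + (b - a) / (INR n + 1) ->
     Rabs (slope f u v) <= K) ->
  Rabs (unif_riemann_sum (fun t => (t - m) * g t) tag a b n
        - ((b - m) * f b - (a - m) * f a - unif_riemann_sum f (fun x _ => x) a b n))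
  <= (b - a) / (INR n + 1) * (4 * M * K + (b - a) * K).
Proof.
  intros Hab Hconv Htag HM HK.
  set (d := (b - a) / (INR n + 1)) in *.
  set (x := unif_node a b n).
  assert (Hd : 0 < d) by (apply Rdiv_lt_0_compat; [lra | apply INR_succ_pos]).
  assert (Hx : forall i, x (S i) = x i + d) by (intros i; apply unif_node_S).
  assert (Hx0 : x O = a) by apply unif_node_0.
  assert (Hxn : x (S n) = b) by apply unif_node_last.
  assert (Hxb : forall i, (i <= S n)%nat -> a <= x i <= b)
    by (intros i Hi; apply unif_node_bounds; [lra | exact Hi]).
  assert (Hlen : INR (S n) * d = b - a)
    by (unfold d; rewrite S_INR; field; apply Rgt_not_eq, INR_succ_pos).
  assert (Htag' : forall i, (i <= n)%nat -> x i < tag (x i) (x (S i)) < x (S i) /\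
            derivable_pt_lim f (tag (x i) (x (S i))) (g (tag (x i) (x (S i))))).
  { intros i Hi; pose proof (Hxb i ltac:(lia)); pose proof (Hxb (S i) ltac:(lia)).
    pose proof (Hx i); apply Htag; lra. }
  pose proof (moment_sum_error f g x (fun i => tag (x i) (x (S i))) n d m M K Hd Hx)
    as Herr.
  rewrite (sum_f_R0_by_parts (fun i => f (x i)) x d m n Hx) in Herr; cbv beta in Herr.
  rewrite Hx0, Hxn, Hlen in Herr.
  apply Herr; clear Herr.
  - rewrite Hx, Hxn; exact Hconv.
  - exact Htag'.
  - intros i Hi; apply HM; pose proof (Htag' i Hi); pose proof (Hxb i ltac:(lia));
      pose proof (Hxb (S i) ltac:(lia)); lra.
  - intros i Hi.
    assert (Hxi : a <= x i <= b + d).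
    { destruct (Nat.eq_dec i (S (S n))) as [->|Hne].
      - rewrite Hx, Hxn; lra.
      - pose proof (Hxb i ltac:(lia)); lra. }
    apply HK; lra.
Qed.

Lemma is_lim_seq_unif_moment_sum (f g : R -> R) (tag : R -> R -> R) (a b rho m I : R) :
  a < b -> 0 < rho -> convex_on (fun x => a - rho <= x <= b + rho) f ->
  (forall x y, a <= x -> x < y -> y <= b ->
     x < tag x y < y /\ derivable_pt_lim f (tag x y) (g (tag x y))) ->
  is_RInt f a b I ->
  is_lim_seq (unif_riemann_sum (fun t => (t - m) * g t) tag a b)
             ((b - m) * f b - (a - m) * f a - I).
Proof.
  intros Hab Hrho Hconv Htag Hf.
  destruct (slope_bounded f (a - rho) (b + rho) Hconv (a - rho / 2) (b + rho / 2))
    as [K HK]; try lra.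
  set (M := b - a + Rabs (a - m)).
  set (c := (b - a) * (4 * M * K + (b - a) * K)).
  set (L := (b - m) * f b - (a - m) * f a - I).
  set (abel n := (b - m) * f b - (a - m) * f a - unif_riemann_sum f (fun x _ => x) a b n).
  assert (Habel : is_lim_seq abel L).
  { apply is_lim_seq_minus'; [apply is_lim_seq_const|].
    apply is_lim_seq_unif_riemann_sum; [lra | intros x y Hxy; lra | exact Hf]. }
  pose proof (is_lim_seq_unif_step c) as Herr.
  apply (is_lim_seq_le_le_loc (fun n => abel n - c / (INR n + 1)) _
                              (fun n => abel n + c / (INR n + 1))).
  - destruct (proj2 (is_lim_seq_spec _ _) (is_lim_seq_unif_step (b - a))
                (mkposreal (rho / 2) ltac:(lra))) as [N HN].
    exists N; intros n Hn; specialize (HN n Hn); simpl in HN.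
    rewrite Rminus_0_r, Rabs_pos_eq in HN
      by (apply Rdiv_le_0_compat; [lra | apply INR_succ_pos]).
    apply Rabs_le_between'.
    replace (c / (INR n + 1)) with ((b - a) / (INR n + 1) * (4 * M * K + (b - a) * K))
      by (unfold c; field; apply Rgt_not_eq, INR_succ_pos).
    apply unif_moment_sum_error; [exact Hab | | exact Htag | |].
    + apply (convex_on_subset _ _ f) with (2 := Hconv); intros x Hx; lra.
    + intros t Ht; unfold M; replace (t - m) with ((t - a) + (a - m)) by ring.
      eapply Rle_trans; [apply Rabs_triang|].
      rewrite (Rabs_pos_eq (t - a)) by lra; lra.
    + intros u v Hu Huv Hv; apply HK; lra.
  - replace (Finite L) with (Finite (L - 0)) by (f_equal; ring).
    apply is_lim_seq_minus'; assumption.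
  - replace (Finite L) with (Finite (L + 0)) by (f_equal; ring).
    apply is_lim_seq_plus'; assumption.
Qed.

Lemma convex_moment_sq_le (f g : R -> R) (a b rho I G : R) :
  a < b -> 0 < rho -> convex_on (fun x => a - rho <= x <= b + rho) f ->
  is_derivative_where_exists f g a b ->
  is_RInt f a b I -> is_RInt (fun x => g x ^ 2) a b G ->
  ((b - a) * (f a + f b) / 2 - I) ^ 2 <= (b - a) ^ 3 / 12 * G.
Proof.
  intros Hab Hrho Hconv Hder Hf Hg.
  destruct (exists_derivable_tags f g a b) as [tag [Htag Htag_der]]; [|exact Hder|].
  { apply (convex_on_subset _ _ f) with (2 := Hconv); intros x Hx; lra. }
  set (m := (a + b) / 2).
  assert (Hsq : is_RInt (fun t => (t - m) ^ 2) a b ((b - a) ^ 3 / 12)).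
  { replace ((b - a) ^ 3 / 12) with ((b - m) ^ 3 / 3 - (a - m) ^ 3 / 3) by (unfold m; field).
    apply is_RInt_sq_shift. }
  replace ((b - a) * (f a + f b) / 2 - I) with ((b - m) * f b - (a - m) * f a - I)
    by (unfold m; field).
  apply (unif_riemann_sum_cauchy_schwarz (fun t => t - m) g tag a b).
  - lra.
  - apply Rdiv_lt_0_compat; [apply pow_lt|]; lra.
  - exact (is_lim_seq_unif_riemann_sum _ tag a b _ Hab Htag Hsq).
  - exact (is_lim_seq_unif_riemann_sum _ tag a b G Hab Htag Hg).
  - exact (is_lim_seq_unif_moment_sum f g tag a b rho m I Hab Hrho Hconv Htag_der Hf).
Qed.

(** * The extremal parabola *)

Definition extremal_parabola (a b t : R) : R := (t - (a + b) / 2) ^ 2 - (b - a) ^ 2 / 12.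

Definition extremal_derivative (a b t : R) : R := 2 * (t - (a + b) / 2).

Lemma convex_on_extremal_parabola (D : R -> Prop) a b : convex_on D (extremal_parabola a b).
Proof.
  intros x y t _ _ Ht; unfold extremal_parabola.
  assert (0 <= t * (1 - t) * (x - y) ^ 2)
    by (apply Rmult_le_pos; [apply Rmult_le_pos | apply pow2_ge_0]; lra).
  replace (t * x + (1 - t) * y - (a + b) / 2)
    with (t * (x - (a + b) / 2) + (1 - t) * (y - (a + b) / 2)) by ring.
  nra.
Qed.

Lemma derivable_pt_lim_extremal_parabola a b x :
  derivable_pt_lim (extremal_parabola a b) x (extremal_derivative a b x).
Proof.
  apply is_derive_Reals; unfold extremal_parabola, extremal_derivative.
  auto_derive; [exact I | ring].
Qed.

Lemma is_RInt_extremal_parabola a b : is_RInt (extremal_parabola a b) a b 0.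
Proof.
  set (m := (a + b) / 2).
  replace 0 with (((b - m) ^ 3 / 3 - (b - a) ^ 2 / 12 * b)
                  - ((a - m) ^ 3 / 3 - (b - a) ^ 2 / 12 * a)) by (unfold m; field).
  apply (is_RInt_derive (fun t => (t - m) ^ 3 / 3 - (b - a) ^ 2 / 12 * t)).
  - intros x _; unfold extremal_parabola; auto_derive; [exact I | fold m; field].
  - intros x _; apply (@ex_derive_continuous R_AbsRing R_NormedModule).
    unfold extremal_parabola; auto_derive; exact I.
Qed.

Lemma is_RInt_extremal_derivative_sq a b :
  is_RInt (fun t => extremal_derivative a b t ^ 2) a b ((b - a) ^ 3 / 3).
Proof.
  set (m := (a + b) / 2).
  replace ((b - a) ^ 3 / 3) with (4 * ((b - m) ^ 3 / 3 - (a - m) ^ 3 / 3)) by (unfold m; field).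
  apply (is_RInt_ext (fun t => 4 * (t - m) ^ 2)).
  - intros x _; unfold extremal_derivative; fold m; simpl; ring.
  - exact (is_RInt_scal _ a b 4 _ (is_RInt_sq_shift a b m)).
Qed.

Lemma is_derivative_where_exists_extremal a b :
  is_derivative_where_exists (extremal_parabola a b) (extremal_derivative a b) a b.
Proof.
  intros x l _ Hl.
  exact (uniqueness_limite _ _ _ _ (derivable_pt_lim_extremal_parabola a b x) Hl).
Qed.

Lemma Riemann_integrable_extremal a b : a <= b ->
  (Riemann_integrable (extremal_parabola a b) a b *
   Riemann_integrable (fun x => extremal_derivative a b x ^ 2) a b)%type.
Proof.
  intros Hab; split; apply Riemann_integrable_of_ex_derive; try exact Hab;
    intros x; unfold extremal_parabola, extremal_derivative; auto_derive; exact I.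
Qed.

Lemma extremal_parabola_endpoints a b :
  extremal_parabola a b a = (b - a) ^ 2 / 6 /\ extremal_parabola a b b = (b - a) ^ 2 / 6.
Proof. unfold extremal_parabola; split; field. Qed.

Lemma product_le_of_moment_sq_le (x y L G : R) :
  0 < L -> (L * (x + y) / 2) ^ 2 <= L ^ 3 / 12 * G -> x * y <= L / 12 * G.
Proof.
  intros HL Hmom.
  assert (Hsq : (x + y) ^ 2 <= L / 3 * G).
  { apply (Rmult_le_reg_l (L ^ 2 / 4)); [apply Rdiv_lt_0_compat; [apply pow_lt|]; lra|].
    replace (L ^ 2 / 4 * (x + y) ^ 2) with ((L * (x + y) / 2) ^ 2) by field.
    replace (L ^ 2 / 4 * (L / 3 * G)) with (L ^ 3 / 12 * G) by field.
    exact Hmom. }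
  pose proof (pow2_ge_0 (x - y)); nra.
Qed.

Theorem theorem3 :
  (forall (P : R -> Prop) (f g : R -> R) (a b : R),
     is_interval P ->
     convex_on (interior P) f ->
     interior P a -> interior P b -> a < b ->
     is_derivative_where_exists f g a b ->
     forall (prf : Riemann_integrable f a b)
            (prg : Riemann_integrable (fun x => g x ^ 2) a b),
     f a * f b > 0 ->
     RiemannInt prf = 0 ->
     f a * f b <= (b - a) / 12 * RiemannInt prg)
  /\
  (forall (a b c : R), a < b -> c < (b - a) / 12 ->
     exists (P : R -> Prop) (f g : R -> R)
            (prf : Riemann_integrable f a b)
            (prg : Riemann_integrable (fun x => g x ^ 2) a b),
       is_interval P /\
       convex_on (interior P) f /\
       interior P a /\ interior P b /\
       is_derivative_where_exists f g a b /\
       f a * f b > 0 /\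
       RiemannInt prf = 0 /\
       f a * f b > c * RiemannInt prg).
Proof.
  split.
  - intros P f g a b HP Hconv Ha Hb Hab Hder prf prg _ Hf0.
    destruct (interval_interior_segment P a b HP Ha Hb) as [rho [Hrho Hseg]].
    assert (Hf : is_RInt f a b 0) by (rewrite <- Hf0; apply is_RInt_RiemannInt).
    pose proof (convex_moment_sq_le f g a b rho 0 (RiemannInt prg) Hab Hrho
                  (convex_on_subset _ _ f Hseg Hconv) Hder Hf (is_RInt_RiemannInt _ _ _ prg))
      as Hmom.
    rewrite Rminus_0_r in Hmom; apply product_le_of_moment_sq_le; [lra | exact Hmom].
  - intros a b c Hab Hc.
    destruct (Riemann_integrable_extremal a b ltac:(lra)) as [prf prg].
    exists (fun _ => True), (extremal_parabola a b), (extremal_derivative a b), prf, prg.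
    rewrite (RiemannInt_eq_of_is_RInt _ _ _ _ prf (is_RInt_extremal_parabola a b)),
      (RiemannInt_eq_of_is_RInt _ _ _ _ prg (is_RInt_extremal_derivative_sq a b)).
    destruct (extremal_parabola_endpoints a b) as [-> ->].
    assert (Hpos : 0 < (b - a) ^ 3) by (apply pow_lt; lra).
    split; [intros x y z _ _ _; exact I|].
    split; [apply convex_on_extremal_parabola|].
    split; [apply interior_full|]; split; [apply interior_full|].
    split; [apply is_derivative_where_exists_extremal|].
    split; [|split; [reflexivity|]]; nra.
Qed.
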